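(* The prescription assigning (a) an object $G_C[l]=\{(H,\varrho)\mid H\in G[l],\varrho\in C(H)\}$ of $\Sigma$ for every $l\in\mathbb{N}$ and (b) a morphism $G_Cf:G_C[l]\to G_C[m]$ given by $G_Cf(H,\varrho)=(Gf(H),f_{H*}(\varrho))$ for every $l,m\in\mathbb{N}$ and $f\in\mathrm{Hom}_\Omega([l],[m])$ defines a functor $G_C:\Omega\rightarrow\Sigma$ injective on objects and morphisms. Therefore, there exists an $\Omega$ category $G_C\Omega$ having the functor $G_C$ with the target category restricted from $\Sigma$ to $G_C\Omega$ as its stalk isofunctor. Furthermore, $G_C\Omega$ is a non monoidal subcategory of $\Sigma$.
   Context: $\Sigma$ is the category of finite sets and functions; $\Omega$ the category of finite ordinals $[l]=\{0,\dots,l-1\}$ and all functions, strict monoidal with $[l]\smile[m]=[l+m]$, $f\smile g(i)=f(i)$ for $i\in[l]$, $g(i-l)+p$ for $i\in[m]+l$, unit $[0]$. $G=P\circ P_+|_\Omega$, where $P$, $P_+$ are the power set and non empty power set endofunctors of $\Sigma$; so $G[l]$ is the set of hypergraphs on $[l]$ (sets of non empty subsets, called hyperedges) and $Gf(H)=\{f(X)\mid X\in H\}$. Fix finite additive commutative monoids $\mathsf{A}$, $\mathsf{M}$. For finite $X\subset\mathbb{N}$, $\mathsf{A}^X$ is the monoid of functions $X\to\mathsf{A}$; for $f:X\to Y$, $f_\star:\mathsf{A}^X\to\mathsf{A}^Y$, $f_\star(w)(s)=\sum_{r\in X,f(r)=s}w(r)$. A calibration of $X$ is an element of $\mathsf{M}^{\mathsf{A}^X}$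 (functions $\mathsf{A}^X\to\mathsf{M}$), with push-forward $f_*(\varpi)(v)=\sum_{w\in\mathsf{A}^X,f_\star(w)=v}\varpi(w)$. A calibration $\varrho$ of a hypergraph $H\in G[l]$ assigns to each $X\in H$ a calibration $\varrho_X\in\mathsf{M}^{\mathsf{A}^X}$; $C(H)$ is the set of these. For $f\in\mathrm{Hom}_\Omega([l],[m])$, $f_{H*}:C(H)\to C(Gf(H))$ is $f_{H*}(\varrho)_Y=\sum_{X\in H,f(X)=Y}f|_{X*}(\varrho_X)$. An $\Omega$ category is a Pro category $D\Omega$ with a strict monoidal isofunctor (stalk isofunctor) $D:\Omega\to D\Omega$; for $D$ injective on objects and morphisms, $D\Omega$ has objects $D[l]$, morphisms $Df$, composition $D(g\circ f)$, identities $D\,\mathrm{id}_{[l]}$, monoidal products $D([l]\smile[m])$, $D(f\smile g)$ and unit $D[0]$. *)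

From HB Require Import structures.
From mathcomp Require Import all_boot all_order all_algebra.
Set Implicit Arguments.
Unset Strict Implicit.
Unset Printing Implicit Defensive.
Import GRing.Theory.
Local Open Scope ring_scope.

Section GC.
Variables (A M : finNmodType).

Definition subX (l : nat) (X : {set 'I_l}) := {i : 'I_l | i \in X}.

Definition wts (l : nat) (X : {set 'I_l}) := {ffun subX X -> A}.

Definition calib (l : nat) (X : {set 'I_l}) := {ffun wts X -> M}.

(* f_star for f restricted to X, with target Y (used when Y = f(X)) :
   f_star(w)(s) = sum_{r in X, f r = s} w r *)
Definition fstar (l m : nat) (f : 'I_l -> 'I_m) (X : {set 'I_l})
  (Y : {set 'I_m}) (w : wts X) : subX Y -> A :=
  fun s => \sum_(r : subX X | f (val r) == val s) w r.
Arguments fstar {l m} f X Y w s.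

Definition push (l m : nat) (f : 'I_l -> 'I_m) (X : {set 'I_l})
  (Y : {set 'I_m}) (varpi : calib X) : calib Y :=
  [ffun v : wts Y =>
     \sum_(w : wts X | [forall s : subX Y, fstar f X Y w s == v s]) varpi w].
Arguments push {l m} f X Y varpi.

(* A calibration of a hypergraph H is encoded as a family indexed by all
   subsets X of [l], vanishing (= the zero calibration) outside H. *)
Definition calibs (l : nat) := {dffun forall X : {set 'I_l}, calib X}.

Definition is_GC (l : nat) (p : {set {set 'I_l}} * calibs l) : bool :=
  (set0 \notin p.1) && [forall X, (X \notin p.1) ==> (p.2 X == [ffun=> 0])].

Definition GC (l : nat) : finType := {p : {set {set 'I_l}} * calibs l | is_GC p}.

Definition Gmap (l m : nat) (f : 'I_l -> 'I_m) (H : {set {set 'I_l}}) :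
  {set {set 'I_m}} := [set f @: (X : {set _}) | X : {set 'I_l} in H].

Definition pushH (l m : nat) (f : 'I_l -> 'I_m) (H : {set {set 'I_l}})
  (rho : calibs l) : calibs m :=
  [ffun Y : {set 'I_m} =>
     [ffun v : wts Y => \sum_(X in H | f @: X == Y) push f X Y (rho X) v]].

Lemma GCmap_proof (l m : nat) (f : 'I_l -> 'I_m) (p : GC l) :
  is_GC (Gmap f (val p).1, pushH f (val p).1 (val p).2).
Proof.
case: p => [[H rho]] /= /andP [H0 Hz].
apply/andP; split=> /=.
  apply/imsetP => -[X XH] /esym /eqP.
  rewrite imset_eq0 => /eqP X0; by move: H0; rewrite -X0 XH.
apply/forallP => Y; apply/implyP => YH.
apply/eqP/ffunP => v; rewrite !ffunE.
rewrite big1 // => X /andP [XH /eqP fX].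
case/negP: YH; apply/imsetP; by exists X.
Qed.

Definition GCmap (l m : nat) (f : 'I_l -> 'I_m) (p : GC l) : GC m :=
  exist (fun q => is_GC q) _ (GCmap_proof f p).

End GC.

(* Functoriality of G_C reduces, hyperedge by hyperedge, to functoriality of the
   push-forward of calibrations, which is a regrouping of sums along the fibres of a
   composite map.  A map f is recovered from G_C f through the singleton hypergraphs
   {{i}}.  For l > 0 the inclusion [l] -> [l+1] has a retraction, so by functoriality it
   embeds G_C[l] into G_C[l+1], missing {{l}}; hence |G_C[l]| is strictly increasing and
   G_C is injective on objects.  Finally, with a = |M|^|A| the number of calibrations of
   a singleton, |G_C[1]| <= a + 1 while |G_C[2]| >= 2 (a + 1)^2. *)

From mathcomp Require Import all_boot all_order all_algebra zify.
Set Implicit Arguments. Unset Strict Implicit. Unset Printing Implicit Defensive.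
Local Open Scope ring_scope.

Section HypergraphCalibrations.
Variables (A M : finNmodType).

Definition fstarf (l m : nat) (f : 'I_l -> 'I_m) (X : {set 'I_l}) (Y : {set 'I_m})
  (w : wts A X) : wts A Y := [ffun s => fstar f w s].
Arguments fstarf {l m} f {X} Y w.

Lemma pushE (l m : nat) (f : 'I_l -> 'I_m) (X : {set 'I_l}) (Y : {set 'I_m})
    (c : calib A M X) (v : wts A Y) :
  push f Y c v = \sum_(w | fstarf f Y w == v) c w.
Proof.
rewrite ffunE; apply: eq_bigl => w; apply/forallP/eqP => [fw|<- s].
  by apply/ffunP => s; rewrite ffunE; apply/eqP.
by rewrite ffunE.
Qed.

Lemma fstarf_id (l : nat) (X : {set 'I_l}) (w : wts A X) : fstarf id X w = w.
Proof.
by apply/ffunP => s; rewrite ffunE /fstar (big_pred1 s) // => r; exact: val_eqE.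
Qed.

Lemma push_id (l : nat) (X : {set 'I_l}) (c : calib A M X) : push id X c = c.
Proof.
apply/ffunP => v; rewrite pushE (eq_bigl (pred1 v)) ?big_pred1_eq // => w.
by rewrite fstarf_id.
Qed.

Lemma push_sum (l m : nat) (f : 'I_l -> 'I_m) (X : {set 'I_l}) (Y : {set 'I_m})
    (I : finType) (P : pred I) (c : I -> calib A M X) (v : wts A Y) :
  push f Y [ffun w => \sum_(i | P i) c i w] v = \sum_(i | P i) push f Y (c i) v.
Proof.
rewrite ffunE (eq_bigr _ (fun w _ => ffunE _ w)) exchange_big.
by apply: eq_bigr => i _; rewrite ffunE.
Qed.

Section Composition.
Variables (l m n : nat) (f : 'I_l -> 'I_m) (g : 'I_m -> 'I_n).
Variables (X : {set 'I_l}) (Y : {set 'I_m}) (Z : {set 'I_n}).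
Hypothesis fXY : f @: X \subset Y.

Definition corestr (r : subX X) : subX Y :=
  exist _ (f (val r)) (subsetP fXY _ (imset_f f (valP r))).

Lemma fstarf_comp (w : wts A X) : fstarf g Z (fstarf f Y w) = fstarf (g \o f) Z w.
Proof.
apply/ffunP => s; rewrite !ffunE /fstar.
rewrite (partition_big corestr (fun t : subX Y => g (val t) == val s)) //=.
apply: eq_bigr => t /eqP gts; rewrite ffunE; apply: eq_bigl => r /=.
rewrite -[corestr r == t]val_eqE /=.
by apply/idP/andP => [frt|[] //]; rewrite (eqP frt) gts.
Qed.

Lemma push_comp (c : calib A M X) : push g Z (push f Y c) = push (g \o f) Z c.
Proof.
apply/ffunP => v; rewrite !pushE.
rewrite (partition_big (fstarf f Y) (fun w' => fstarf g Z w' == v)) => [|w];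
  last by rewrite fstarf_comp.
apply: eq_bigr => w' /eqP gw'; rewrite pushE; apply: eq_bigl => w.
by apply/eqP/andP => [fw|[_ /eqP //]]; rewrite -fstarf_comp fw gw'.
Qed.

End Composition.

Lemma set0_notin_GC (l : nat) (p : GC A M l) : set0 \notin (val p).1.
Proof. by case: p => -[H rho] /= /andP[]. Qed.

Lemma calib_GC_out (l : nat) (p : GC A M l) (X : {set 'I_l}) :
  X \notin (val p).1 -> (val p).2 X = 0.
Proof. by case: p => -[H rho] /= /andP[_ /forallP/(_ X)/implyP] rho0 /rho0/eqP. Qed.

Definition hyperedge_calib (l : nat) (p : GC A M l) (X : {set 'I_l}) :
  option (calib A M X) :=
  if X \in (val p).1 then Some ((val p).2 X) else None.

Lemma hyperedge_calib_set0 (l : nat) (p : GC A M l) : hyperedge_calib p set0 = None.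
Proof. by rewrite /hyperedge_calib (negbTE (set0_notin_GC p)). Qed.

Lemma eq_GC (l : nat) (p q : GC A M l) :
  (forall X, hyperedge_calib p X = hyperedge_calib q X) -> p = q.
Proof.
rewrite /hyperedge_calib => pq; apply: val_inj.
rewrite [val p]surjective_pairing [val q]surjective_pairing.
have Hpq : (val p).1 = (val q).1.
  by apply/setP => X; move: (pq X); do 2!case: (_ \in _).
congr pair => //; apply/ffunP => X; move: (pq X); rewrite -Hpq.
by case: ifPn => [_ [] | Xp _] //; rewrite !calib_GC_out // -Hpq.
Qed.

Definition calibs0 (l : nat) : calibs A M l := finfun (fun X => 0 : calib A M X).

Definition restrict_calibs (l : nat) (H : {set {set 'I_l}}) (rho : calibs A M l) :
  calibs A M l := finfun (fun X => if X \in H then rho X else 0).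

Lemma is_GC_restrict (l : nat) (H : {set {set 'I_l}}) (rho : calibs A M l) :
  set0 \notin H -> is_GC (H, restrict_calibs H rho).
Proof.
move=> H0; apply/andP; split=> //; apply/forallP => X.
by rewrite /= ffunE; case: (X \in H) => /=.
Qed.

Definition GC_of (l : nat) (H : {set {set 'I_l}}) (rho : calibs A M l)
  (H0 : set0 \notin H) : GC A M l :=
  exist _ (H, restrict_calibs H rho) (is_GC_restrict rho H0).

Lemma hyperedge_calib_GC_of (l : nat) (H : {set {set 'I_l}}) (rho : calibs A M l)
    (H0 : set0 \notin H) (X : {set 'I_l}) :
  hyperedge_calib (GC_of rho H0) X = if X \in H then Some (rho X) else None.
Proof. by rewrite /hyperedge_calib /= ffunE; case: (X \in H). Qed.

Lemma Gmap_id (l : nat) (H : {set {set 'I_l}}) : Gmap (fun i => i) H = H.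
Proof. by rewrite /Gmap (eq_imset _ (fun X => imset_id X)) imset_id. Qed.

Lemma pushH_id (l : nat) (H : {set {set 'I_l}}) (rho : calibs A M l) :
  (forall X, X \notin H -> rho X = 0) -> pushH (fun i => i) H rho = rho.
Proof.
move=> rho0; apply/ffunP => Y; apply/ffunP => v; rewrite !ffunE.
under eq_bigl do rewrite imset_id.
have [YH|YnH] := boolP (Y \in H).
  by rewrite (big_pred1 Y) ?push_id // => X; rewrite /= andb_idl // => /eqP->.
by rewrite rho0 // big_pred0 ?ffunE // => X; apply: contraNF YnH => /andP[XH /eqP<-].
Qed.

Lemma GCmapE (l m : nat) (f : 'I_l -> 'I_m) (p : GC A M l) :
  val (GCmap f p) = (Gmap f (val p).1, pushH f (val p).1 (val p).2).
Proof. by []. Qed.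

Lemma GCmap_id (l : nat) (p : GC A M l) : GCmap (fun i : 'I_l => i) p = p.
Proof.
apply: val_inj; rewrite GCmapE Gmap_id pushH_id; last exact: calib_GC_out.
by case: (val p).
Qed.

Section MapComposition.
Variables (l m n : nat) (f : 'I_l -> 'I_m) (g : 'I_m -> 'I_n).

Lemma Gmap_comp (H : {set {set 'I_l}}) : Gmap (g \o f) H = Gmap g (Gmap f H).
Proof. by rewrite /Gmap -imset_comp; apply: eq_imset => X; exact: imset_comp. Qed.

Lemma pushH_comp (H : {set {set 'I_l}}) (rho : calibs A M l) :
  pushH (g \o f) H rho = pushH g (Gmap f H) (pushH f H rho).
Proof.
apply/ffunP => Z; apply/ffunP => v; rewrite !ffunE.
rewrite (partition_big (fun X : {set 'I_l} => f @: X)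
                       (fun Y : {set 'I_m} => (Y \in Gmap f H) && (g @: Y == Z)))
  => [|X /andP[XH]]; last by rewrite imset_comp imset_f.
apply: eq_bigr => _ /andP[/imsetP[X0 _ ->] gfX0]; rewrite [pushH f H rho _]ffunE push_sum.
apply: eq_big => [X|X /andP[/andP[_ /eqP gfXZ] /eqP <-]]; last first.
  by rewrite push_comp // -imset_comp gfXZ.
rewrite imset_comp andbAC; case: eqP => [->|_]; by rewrite ?gfX0 ?andbT ?andbF.
Qed.

End MapComposition.

Lemma GCmap_comp (l m n : nat) (f : 'I_l -> 'I_m) (g : 'I_m -> 'I_n) (p : GC A M l) :
  GCmap (g \o f) p = GCmap g (GCmap f p).
Proof. by apply: val_inj; rewrite !GCmapE Gmap_comp pushH_comp. Qed.

Lemma eq_GCmap (l m : nat) (f g : 'I_l -> 'I_m) :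
  f =1 g -> GCmap (A:=A) (M:=M) f =1 GCmap g.
Proof.
move=> fg p; apply: val_inj; rewrite !GCmapE /Gmap /pushH.
have fgX (X : {set 'I_l}) : f @: X = g @: X by exact: eq_imset.
congr pair; first by apply: eq_imset => X; rewrite fgX.
apply/ffunP => Y; apply/ffunP => v; rewrite !ffunE.
apply: eq_big => [X|X _]; first by rewrite fgX.
rewrite !ffunE; apply: eq_bigl => w; apply: eq_forallb => s.
by rewrite /fstar; under eq_bigl do rewrite fg.
Qed.

Lemma GCmap_can (l m : nat) (f : 'I_l -> 'I_m) (r : 'I_m -> 'I_l) :
  cancel f r -> cancel (GCmap (A:=A) (M:=M) f) (GCmap r).
Proof. by move=> fK p; rewrite -GCmap_comp (eq_GCmap fK) GCmap_id. Qed.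

Lemma set0_notin_set1 (l : nat) (i : 'I_l) : set0 \notin [set [set i]].
Proof. by rewrite in_set1; apply/eqP => /setP/(_ i); rewrite !inE eqxx. Qed.

Lemma GCmap_fun_inj (l m : nat) (f g : 'I_l -> 'I_m) :
  GCmap (A:=A) (M:=M) f =1 GCmap g -> f =1 g.
Proof.
move=> fg i; have := congr1 (fst \o val) (fg (GC_of (calibs0 l) (set0_notin_set1 i))).
by rewrite /comp !GCmapE /Gmap !imset_set1 => /set1_inj/set1_inj.
Qed.

Lemma set1_notin_Gmap (l m : nat) (f : 'I_l -> 'I_m) (H : {set {set 'I_l}}) (j : 'I_m) :
  (forall i, f i != j) -> [set j] \notin Gmap f H.
Proof.
move=> fj; apply/imsetP => -[X _ /setP/(_ j)]; rewrite in_set1 eqxx.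
by case/esym/imsetP => i _ /eqP; rewrite eq_sym (negbTE (fj i)).
Qed.

Lemma GC0_eq (p q : GC A M 0) : p = q.
Proof.
apply: eq_GC => X; rewrite (_ : X = set0) ?hyperedge_calib_set0 //.
by apply/setP => -[].
Qed.

Lemma GCmap_widen_inj (l : nat) : injective (GCmap (A:=A) (M:=M) (widen_ord (leqnSn l))).
Proof.
(* [0] has no retraction from [1], but G_C[0] is a singleton. *)
case: l => [p q _|l]; first exact: GC0_eq.
apply: (can_inj (GCmap_can (r := inord) _)) => i.
by apply: val_inj; exact: inordK (ltn_ord i).
Qed.

Lemma card_GC_ltS (l : nat) : (#|GC A M l| < #|GC A M l.+1|)%N.
Proof.
pose w := GCmap (A:=A) (M:=M) (widen_ord (leqnSn l)).
pose new := GC_of (calibs0 l.+1) (set0_notin_set1 (@ord_max l)).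
have w_new p : w p <> new.
  move=> /(congr1 (fst \o val)); rewrite /comp GCmapE /= => Gw.
  have /negP[] := set1_notin_Gmap (val p).1 (j := ord_max)
    (fun i => negbT (ltn_eqF (ltn_ord i)) : widen_ord (leqnSn l) i != ord_max).
  by rewrite Gw set11.
pose F o := if o is Some p then w p else new.
have F_inj : injective F.
  move=> [p|] [q|] e; [exact: congr1 _ (GCmap_widen_inj e) | case: (w_new p e) |
                       case: (w_new q (esym e)) | by []].
by rewrite -card_option; exact: leq_card F_inj.
Qed.

Lemma GC_inj (l m : nat) : GC A M l = GC A M m -> l = m.
Proof.
have card_GC_mono : {homo (fun l => #|GC A M l|) : i j / (i < j)%N}.
  exact: homo_ltn ltn_trans card_GC_ltS.
move=> GClm; have cardlm : #|GC A M l| = #|GC A M m| by rewrite GClm.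
by case: (ltngtP l m) => // /card_GC_mono; rewrite cardlm ltnn.
Qed.

Lemma card_calib (l : nat) (X : {set 'I_l}) :
  #|calib A M X| = (#|M| ^ (#|A| ^ #|X|))%N.
Proof.
rewrite /calib card_ffun /wts card_ffun /subX card_sig.
by congr (_ ^ (_ ^ _))%N; apply: eq_card => i.
Qed.

Lemma card_GC1_le : (#|GC A M 1| <= (#|M| ^ #|A|).+1)%N.
Proof.
have subsets1 (X : {set 'I_1}) : X = set0 \/ X = setT.
  have [X0|X0] := boolP (ord0 \in X); [right|left]; apply/setP => i;
    by rewrite (ord1 i) !inE ?X0 ?(negbTE X0).
have F_inj : injective (fun p : GC A M 1 => hyperedge_calib p setT).
  move=> p q pq; apply: eq_GC => X.
  by case: (subsets1 X) => ->; rewrite ?hyperedge_calib_set0.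
have := leq_card _ F_inj.
by rewrite card_option card_calib cardsT card_ord expn1.
Qed.

Lemma card_GC2_ge : ((#|M| ^ #|A|).+1 ^ 2 * 2 <= #|GC A M 2|)%N.
Proof.
pose X0 : {set 'I_2} := [set ord0]; pose X1 : {set 'I_2} := [set ord_max].
have X01 : X0 != X1 by apply/eqP => /setP/(_ ord0); rewrite !inE.
have X0T : X0 != setT by apply/eqP => /setP/(_ ord_max); rewrite !inE.
have X1T : X1 != setT by apply/eqP => /setP/(_ ord0); rewrite !inE.
have nz (X : {set 'I_2}) : (0 < #|X|)%N -> (set0 == X) = false.
  by rewrite card_gt0 eq_sym => /negbTE.
(* The hypergraphs inside {{0}, {1}, [2]}, with any calibration on {0} and {1}, zero on [2]. *)
pose H (t : option (calib A M X0) * option (calib A M X1) * bool) : {set {set 'I_2}} :=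
  [set X | [|| (X == X0) && isSome t.1.1, (X == X1) && isSome t.1.2 | (X == setT) && t.2]].
have H0 t : set0 \notin H t by rewrite inE /X0 /X1 !nz // ?cards1 ?cardsT ?card_ord.
pose rho (t : option (calib A M X0) * option (calib A M X1) * bool) : calibs A M 2 :=
  finfun (dfwith (dfwith (fun X => 0 : calib A M X) (odflt 0 t.1.1)) (odflt 0 t.1.2)).
pose F t := GC_of (rho t) (H0 t).
pose G p := (hyperedge_calib p X0, hyperedge_calib p X1, setT \in (val (p : GC A M 2)).1).
have FK : cancel F G.
  move=> [[c0 c1] b]; rewrite /G !hyperedge_calib_GC_of !inE /= !ffunE.
  rewrite dfwith_in dfwith_out 1?eq_sym // dfwith_in.
  rewrite [X1 == X0]eq_sym [setT == X0]eq_sym [setT == X1]eq_sym.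
  by rewrite (negbTE X01) (negbTE X0T) (negbTE X1T) !eqxx /=; case: c0; case: c1.
have := leq_card F (can_inj FK).
by rewrite !card_prod !card_option card_bool !card_calib !cards1 expn1 mulnn.
Qed.
End HypergraphCalibrations.

Theorem proposition3p20 (A M : finNmodType) :
  (* G_C is a functor Omega -> Sigma: identities ... *)
  (forall (l : nat) (p : GC A M l), GCmap (fun i : 'I_l => i) p = p) /\
  (* ... and composition *)
  (forall (l m n : nat) (f : 'I_l -> 'I_m) (g : 'I_m -> 'I_n) (p : GC A M l),
      GCmap (g \o f) p = GCmap g (GCmap f p)) /\
  (* G_C is injective on objects *)
  (forall l m : nat, GC A M l = GC A M m -> l = m) /\
  (* G_C is injective on morphisms *)
  (forall (l m : nat) (f g : 'I_l -> 'I_m),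
      @GCmap A M l m f =1 @GCmap A M l m g -> f =1 g) /\
  (* G_C Omega is a non monoidal subcategory of Sigma: its monoidal product
     G_C[l] (x) G_C[m] := G_C[l+m] is neither the cartesian product nor the
     disjoint union of Sigma (not even up to bijection) *)
  (exists l m : nat,
      #|GC A M (l + m)| <> (#|GC A M l| * #|GC A M m|)%N /\
      #|GC A M (l + m)| <> (#|GC A M l| + #|GC A M m|)%N).
Proof.
split; first exact: GCmap_id.
split; first exact: GCmap_comp.
split; first exact: GC_inj.
split; first exact: GCmap_fun_inj.
exists 1%N, 1%N; rewrite addn1.
have calib1_gt0 : (0 < #|M| ^ #|A|)%N.
  by rewrite expn_gt0; apply/orP; left; apply/card_gt0P; exists 0.
move: (card_GC1_le A M) (card_GC2_ge A M) calib1_gt0.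
move: #|GC A M 1| #|GC A M 2| (#|M| ^ #|A|)%N => N1 N2 a; split; nia.
Qed.
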